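(* Let $n\ge 1$ and, for each $j\in\{1,\dots,n\}$, let $(P_j(k))_{k\in\mathbb{N}_0}$ be a probability distribution on the nonnegative integers (the degree distribution of the contact tree $\mathcal{T}_j$) with finite mean $\mathbb{E}(k_j)=\sum_k kP_j(k)$ and finite standard deviation $\sigma(k_j)=\sqrt{\mathbb{E}(k_j^2)-\mathbb{E}(k_j)^2}$, and assume $\sum_{l=1}^n\mathbb{E}(k_l)>0$. Let $T_j\in[0,1]$ be the probability of transmitting the disease along an edge of $\mathcal{T}_j$, and suppose a fraction $Q\in[0,1]$ of all infected individuals is completely isolated and transmits to no one. Then the basic reproduction number $R_0$ (defined in the context) equals $$R_0=(1-Q)\sum_{j=1}^n T_j\left(\mathbb{E}(k_j)\left(1-\frac{1}{\sum_{l=1}^n\mathbb{E}(k_l)}\right)+\frac{\sigma(k_j)^2}{\sum_{l=1}^n\mathbb{E}(k_l)}\right).$$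
   Context: Model: a population's contacts are split into $n$ types; a randomly chosen individual has $k_i$ contacts of type $i$ with probability $\prod_i P_i(k_i)$ (independent types). The ramification distribution (number of further contacts of each type of an individual reached by following a randomly chosen contact) is $$\tilde P(k_1,\dots,k_n)=\frac{\sum_{l=1}^n (k_l+1)P_l(k_l+1)\prod_{i\neq l}P_i(k_i)}{\sum_{l=1}^n\mathbb{E}(k_l)}.$$ For an individual with ramification $(k_1,\dots,k_n)$, the expected number of individuals it infects is $$a_{k_1\dots k_n}=(1-Q)\sum_{m_1=0}^{k_1}\cdots\sum_{m_n=0}^{k_n}(m_1+\dots+m_n)\prod_{i=1}^n\binom{k_i}{m_i}T_i^{m_i}(1-T_i)^{k_i-m_i},$$ and the basic reproduction number is $R_0=\sum_{k_1,\dots,k_n\ge0}\tilde P(k_1,\dots,k_n)\,a_{k_1\dots k_n}$. *)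

From HB Require Import structures.
From mathcomp Require Import all_boot all_order all_algebra.
From mathcomp Require Import all_classical all_reals.
From mathcomp Require Import ereal topology normedtype sequences esum.
Set Implicit Arguments. Unset Strict Implicit. Unset Printing Implicit Defensive.
Import Order.TTheory GRing.Theory Num.Theory.
Local Open Scope ring_scope.
Local Open Scope ereal_scope.

Section Defs.
Variable R : realType.

(* E(k) = sum_k k P(k), as a real number (meaningful when finite) *)
Definition mean (P : nat -> R) : R :=
  fine (\esum_(k in [set: nat]) ((k%:R * P k)%R)%:E).

Definition second_moment (P : nat -> R) : R :=
  fine (\esum_(k in [set: nat]) ((k%:R ^+ 2 * P k)%R)%:E).

Definition stdev (P : nat -> R) : R :=
  Num.sqrt (second_moment P - mean P ^+ 2)%R.

Variable n : nat.

Definition ramif (P : 'I_n -> nat -> R) (k : {ffun 'I_n -> nat}) : R :=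
  ((\sum_(l < n) (k l).+1%:R * P l (k l).+1 * \prod_(i < n | i != l) P i (k i))
   / \sum_(l < n) mean (P l))%R.

(* a_{k_1...k_n}: the nested sums over 0 <= m_i <= k_i are written as one sum
   over m : 'I_n -> 'I_(K+1) with K = max_i k_i, restricted to m_i <= k_i. *)
Definition infected (T : 'I_n -> R) (Q : R) (k : {ffun 'I_n -> nat}) : R :=
  ((1 - Q) *
   \sum_(m : {ffun 'I_n -> 'I_(\max_(i < n) k i).+1} | [forall i, (m i <= k i)%N])
     ((\sum_(i < n) (m i : nat))%:R *
      \prod_(i < n) ('C(k i, m i)%:R * T i ^+ m i * (1 - T i) ^+ (k i - m i))))%R.

Definition R0 (P : 'I_n -> nat -> R) (T : 'I_n -> R) (Q : R) : \bar R :=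
  \esum_(k in [set: {ffun 'I_n -> nat}]) (ramif P k * infected T Q k)%:E.

End Defs.

From HB Require Import structures.
From mathcomp Require Import all_boot all_order all_algebra.
From mathcomp Require Import all_classical all_reals.
From mathcomp Require Import ereal topology normedtype sequences esum.
From mathcomp Require Import ring lra.
Set Implicit Arguments. Unset Strict Implicit. Unset Printing Implicit Defensive.
Import Order.TTheory GRing.Theory Num.Theory.
Local Open Scope ring_scope.
Local Open Scope ereal_scope.

(* Since a binomial variable with parameters (k, T) has mean k T, the expected
   number of infections is a_k = (1 - Q) sum_j T_j k_j.  Hence Ptilde(k) a_k is a
   finite sum over pairs (l, j) of terms that factor over the contact types, and
   summing each of them over N^n gives a product of one-dimensional sums:
   sum_k (k+1) P(k+1) = E(k), sum_k (k+1) k P(k+1) = E(k^2) - E(k), E(k) or 1.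
   Collecting the pairs with l = j and with l <> j yields the formula. *)

Section FiniteSums.
Local Open Scope ring_scope.
Variable R : comPzRingType.

Lemma sum_ffun_sum_mul_prod (I J : finType) (w b : I -> J -> R) :
  \sum_(m : {ffun I -> J}) (\sum_i w i (m i)) * \prod_i b i (m i) =
  \sum_j (\sum_x w j x * b j x) * \prod_(i | i != j) \sum_x b i x.
Proof.
under eq_bigr => m _ do rewrite mulr_suml.
rewrite exchange_big; apply: eq_bigr => j _.
pose F i x := if i == j then w i x * b i x else b i x.
have FE m : w j (m j) * \prod_i b i (m i) = \prod_i F i (m i).
  rewrite (bigD1 j) //= [RHS](bigD1 j) //= /F eqxx mulrA; congr (_ * _).
  by apply: eq_bigr => i /negPf ->.
under eq_bigr do rewrite FE.
rewrite -(bigA_distr_bigA F) (bigD1 j) //= /F eqxx; congr (_ * _).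
by apply: eq_bigr => i /negPf ->.
Qed.

Lemma sum_ord_vanishing_tail (F : nat -> R) k N : (k <= N)%N ->
  (forall x, (k < x)%N -> F x = 0) -> \sum_(x < N.+1) F x = \sum_(x < k.+1) F x.
Proof.
move=> kN F0; rewrite -!(big_mkord xpredT) (big_cat_nat _ (n := k.+1)) //=.
rewrite [X in _ + X]big_nat_cond [X in _ + X]big1 ?addr0 //.
by move=> x /andP[/andP[/F0]].
Qed.

Definition binomial_pmf (k : nat) (t : R) (x : nat) : R :=
  'C(k, x)%:R * t ^+ x * (1 - t) ^+ (k - x).

Lemma binomial_pmf_small k t x : (k < x)%N -> binomial_pmf k t x = 0.
Proof. by move=> kx; rewrite /binomial_pmf bin_small // !mul0r. Qed.

Lemma sum_binomial_pmf k t : \sum_(x < k.+1) binomial_pmf k t x = 1.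
Proof.
have := exprDn (1 - t) t k; rewrite subrK expr1n => ->.
by apply: eq_bigr => x _; rewrite /binomial_pmf -[in RHS]mulr_natl; ring.
Qed.

Lemma sum_binomial_pmf_mean k t :
  \sum_(x < k.+1) x%:R * binomial_pmf k t x = k%:R * t.
Proof.
case: k => [|k]; first by rewrite big_ord_recl big_ord0 !mul0r addr0.
rewrite big_ord_recl mul0r add0r.
have shift (x : 'I_k.+1) : (lift ord0 x)%:R * binomial_pmf k.+1 t (lift ord0 x) =
    k.+1%:R * t * binomial_pmf k t x.
  by rewrite lift0 /binomial_pmf subSS !mulrA -natrM -mul_bin_diag natrM exprS /=; ring.
under eq_bigr do rewrite shift.
by rewrite -big_distrr /= sum_binomial_pmf mulr1.
Qed.

End FiniteSums.

Section Infected.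
Local Open Scope ring_scope.
Variables (R : realType) (n : nat) (T : 'I_n -> R) (Q : R).

Lemma infectedE (k : {ffun 'I_n -> nat}) :
  infected T Q k = (1 - Q) * \sum_(j < n) T j * (k j)%:R.
Proof.
rewrite /infected; congr (_ * _).
set K := \max_(i < n) k i.
have kK i : (k i <= K)%N by exact: leq_bigmax.
have sum_pmf i : \sum_(x < K.+1) binomial_pmf (k i) (T i) x = 1.
  rewrite (sum_ord_vanishing_tail (F := binomial_pmf (k i) (T i)) (kK i)) ?sum_binomial_pmf //.
  exact: binomial_pmf_small.
have sum_pmf_mean i : \sum_(x < K.+1) x%:R * binomial_pmf (k i) (T i) x = (k i)%:R * T i.
  rewrite (sum_ord_vanishing_tail (F := fun x => x%:R * binomial_pmf (k i) (T i) x) (kK i)).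
    exact: sum_binomial_pmf_mean.
  by move=> x kx; rewrite binomial_pmf_small ?mulr0.
rewrite big_mkcond /=.
transitivity (\sum_(m : {ffun 'I_n -> 'I_K.+1})
  (\sum_i (m i : nat)%:R) * \prod_i binomial_pmf (k i) (T i) (m i)).
  apply: eq_bigr => m _; rewrite natr_sum; case: ifP => // /negbT/forallPn[i].
  by rewrite -ltnNge => ki; rewrite [X in _ * X](bigD1 i) //= binomial_pmf_small // mul0r mulr0.
rewrite (sum_ffun_sum_mul_prod (fun _ (x : 'I_K.+1) => (x : nat)%:R)
                               (fun i x => binomial_pmf (k i) (T i) x)).
apply: eq_bigr => j _.
by rewrite sum_pmf_mean big1 ?mulr1 1?mulrC.
Qed.
End Infected.

Section Esum.
Variable R : realType.

Lemma esumZl (T : choiceType) (I : set T) (a : T -> \bar R) (c : R) :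
  (0 <= c)%R -> (forall i, I i -> 0 <= a i) ->
  \esum_(i in I) (c%:E * a i) = c%:E * \esum_(i in I) a i.
Proof.
move=> c0 a0; rewrite /esum -ereal_supZl//; last first.
  by apply/set0P; exists 0; exists set0; [exact: fsets_set0|rewrite fsbig_set0].
rewrite image_comp; congr ereal_sup; apply: eq_imagel => X [finX XI] /=.
rewrite !fsbig_finite// [in RHS]big_seq ge0_sume_distrr => [|i].
  by rewrite -big_seq.
by rewrite in_fset_set// inE => /XI/a0.
Qed.

Lemma esum_succ (a : nat -> \bar R) : (forall k, 0 <= a k) -> a 0%N = 0 ->
  \esum_(k in [set: nat]) a k.+1 = \esum_(k in [set: nat]) a k.
Proof.
move=> a0 a00; rewrite [RHS](esumID [set 0%N]) // setTI esum_set1 // a00 add0e.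
rewrite (reindex_esum setT (setT `&` ~` [set 0%N])%classic succn) //.
split=> [k _ //|x y _ _ [] //|y [_ /= y0]].
by exists y.-1 => //=; rewrite prednK // lt0n; exact/eqP.
Qed.

Definition ffun_cons (T : Type) n (x : T) (g : {ffun 'I_n -> T}) : {ffun 'I_n.+1 -> T} :=
  [ffun i => if unlift ord0 i is Some j then g j else x].

Lemma esum_ffun_recl (T : choiceType) n (a : {ffun 'I_n.+1 -> T} -> \bar R) :
  (forall k, 0 <= a k) ->
  \esum_(k in [set: {ffun 'I_n.+1 -> T}]) a k =
  \esum_(x in [set: T]) \esum_(g in [set: {ffun 'I_n -> T}]) a (ffun_cons x g).
Proof.
move=> a0; rewrite esum_esum //.
rewrite (reindex_esum ([set: T] `*`` fun=> [set: {ffun 'I_n -> T}])%classic setT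
  (fun p => ffun_cons p.1 p.2)) //.
split=> [//|[x g] [y h] _ _ /ffunP E|k _].
- have := E ord0; rewrite !ffunE unlift_none /= => ->; congr pair.
  by apply/ffunP => j; have := E (lift ord0 j); rewrite !ffunE liftK.
- exists (k ord0, [ffun j => k (lift ord0 j)]) => //.
  by apply/ffunP => i; rewrite ffunE; case: unliftP => [j ->|->]; rewrite ?ffunE.
Qed.

Lemma esum_ffun_prod n (f : 'I_n -> nat -> R) (s : 'I_n -> R) :
  (forall i k, 0 <= f i k)%R ->
  (forall i, \esum_(k in [set: nat]) (f i k)%:E = (s i)%:E) ->
  \esum_(k in [set: {ffun 'I_n -> nat}]) (\prod_i f i (k i))%:E = (\prod_i s i)%:E.
Proof.
elim: n f s => [|n IH] f s f0 fs.
  have -> : [set: {ffun 'I_0 -> nat}]%classic = [set [ffun=> 0%N]]%classic.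
    by apply/seteqP; split => k //= _; apply/ffunP => -[].
  by rewrite esum_set1 !big_ord0.
have s0 i : (0 <= s i)%R by rewrite -lee_fin -fs esum_ge0 // => *; rewrite lee_fin.
rewrite esum_ffun_recl => [|k]; last by rewrite lee_fin prodr_ge0.
under eq_esum => x _.
  under eq_esum => g _ do rewrite big_ord_recl EFinM !ffunE unlift_none.
  rewrite esumZl ?lee_fin //; last by move=> g _; rewrite lee_fin prodr_ge0.
  under eq_esum => g _ do under eq_bigr => j _ do rewrite ffunE liftK.
  rewrite (IH (fun j => f (lift ord0 j)) (fun j => s (lift ord0 j))) // -EFinM.
  over.
under eq_esum do rewrite /= mulrC EFinM.
rewrite esumZl ?lee_fin ?prodr_ge0 // => [|x _]; last by rewrite lee_fin.
by rewrite (fs ord0) -EFinM [in RHS]big_ord_recl mulrC.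
Qed.

End Esum.

Section Moments.
Variables (R : realType) (p : nat -> R).
Hypothesis p_ge0 : forall k, (0 <= p k)%R.
Hypothesis p_sum1 : \esum_(k in [set: nat]) (p k)%:E = 1.
Hypothesis p_mean_fin : \esum_(k in [set: nat]) ((k%:R * p k)%R)%:E < +oo.
Hypothesis p_second_fin : \esum_(k in [set: nat]) ((k%:R ^+ 2 * p k)%R)%:E < +oo.

Lemma esum_mean : \esum_(k in [set: nat]) ((k%:R * p k)%R)%:E = (mean p)%:E.
Proof.
rewrite /mean fineK // ge0_fin_numE // esum_ge0 // => k _.
by rewrite lee_fin mulr_ge0.
Qed.

Lemma esum_second_moment :
  \esum_(k in [set: nat]) ((k%:R ^+ 2 * p k)%R)%:E = (second_moment p)%:E.
Proof.
rewrite /second_moment fineK // ge0_fin_numE // esum_ge0 // => k _.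
by rewrite lee_fin mulr_ge0 // sqr_ge0.
Qed.

Lemma esum_mean_succ :
  \esum_(k in [set: nat]) ((k.+1%:R * p k.+1)%R)%:E = (mean p)%:E.
Proof.
rewrite -esum_mean (esum_succ (a := fun k => ((k%:R * p k)%R)%:E)) ?mul0r //.
by move=> k; rewrite lee_fin mulr_ge0.
Qed.

Lemma esum_mean_succ_mul :
  \esum_(k in [set: nat]) ((k.+1%:R * p k.+1 * k%:R)%R)%:E =
  (second_moment p - mean p)%:E.
Proof.
(* (k+1)^2 = (k+1) k + (k+1); the subtraction is done only once the sum is known finite. *)
have split_square : \esum_(k in [set: nat]) ((k.+1%:R * p k.+1 * k%:R)%R)%:E + (mean p)%:E =
    (second_moment p)%:E.
  rewrite -esum_mean_succ -esumD => [|k _|k _]; try by rewrite lee_fin !mulr_ge0.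
  rewrite -esum_second_moment -(esum_succ (a := fun k => ((k%:R ^+ 2 * p k)%R)%:E)).
  - by apply: eq_esum => k _; rewrite -EFinD -natr1; congr EFin; ring.
  - by move=> k; rewrite lee_fin mulr_ge0 // sqr_ge0.
  - by rewrite expr0n mul0r.
move: split_square; set a := esum _ _.
have : 0 <= a by rewrite esum_ge0 // => k _; rewrite lee_fin !mulr_ge0.
by case: a => [r _ /= /eqP|//|//]; rewrite -EFinD eqe => /eqP <-; rewrite addrK.
Qed.

Lemma mean_ge0 : (0 <= mean p)%R.
Proof. by rewrite -lee_fin -esum_mean esum_ge0 // => k _; rewrite lee_fin mulr_ge0. Qed.

Lemma variance_ge0 : (0 <= second_moment p - mean p ^+ 2)%R.
Proof.
set m := mean p.
have m0 : (0 <= m)%R := mean_ge0.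
have sum_squares : \esum_(k in [set: nat]) ((k%:R ^+ 2 * p k + m ^+ 2 * p k)%R)%:E =
    (second_moment p + m ^+ 2)%:E.
  under eq_esum do rewrite EFinD [X in _ + X]EFinM.
  rewrite esumD => [|k _|k _]; last 2 first.
  - by rewrite lee_fin mulr_ge0 // sqr_ge0.
  - by rewrite -EFinM lee_fin mulr_ge0 // sqr_ge0.
  rewrite esumZl ?sqr_ge0 // => [|k _]; last by rewrite lee_fin.
  by rewrite p_sum1 mule1 esum_second_moment -EFinD.
(* Sum 2 m k <= k^2 + m^2 against p. *)
have cross_le : ((2 * m * m)%R)%:E <=
    \esum_(k in [set: nat]) ((k%:R ^+ 2 * p k + m ^+ 2 * p k)%R)%:E.
  rewrite EFinM {2}/m -esum_mean -esumZl ?mulr_ge0 // => [|k _]; last first.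
    by rewrite lee_fin mulr_ge0.
  apply: le_esum => k _; rewrite -EFinM lee_fin.
  have : (0 <= (k%:R - m) ^+ 2 * p k)%R by rewrite mulr_ge0 // sqr_ge0.
  by move=> dev_ge0; nra.
by move: cross_le; rewrite sum_squares lee_fin => ?; nra.
Qed.

End Moments.

Section ReproductionNumber.
Local Open Scope ring_scope.
Variables (R : realType) (n : nat) (P : 'I_n -> nat -> R) (T : 'I_n -> R) (Q : R).
Local Notation S := (\sum_(l < n) mean (P l)).

(* Up to the constant (1 - Q) T_j / S, the (l, j) summand of
   [ramif P k * infected T Q k] is the product over i of these factors. *)
Definition ramif_factor (l j i : 'I_n) (x : nat) : R :=
  (if i == l then x.+1%:R * P i x.+1 else P i x) * (if i == j then x%:R else 1).

Lemma prod_ramif_factor l j (k : {ffun 'I_n -> nat}) :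
  \prod_i ramif_factor l j i (k i) =
  (k l).+1%:R * P l (k l).+1 * \prod_(i < n | i != l) P i (k i) * (k j)%:R.
Proof.
rewrite big_split /= -[X in _ * X]big_mkcond big_pred1_eq (bigD1 l) //= eqxx.
by congr (_ * _ * _); apply: eq_bigr => i /negPf ->.
Qed.

Lemma ramif_infectedE k : ramif P k * infected T Q k =
  \sum_l \sum_j (1 - Q) * T j / S * \prod_i ramif_factor l j i (k i).
Proof.
rewrite infectedE /ramif !mulr_suml; apply: eq_bigr => l _.
by rewrite !mulr_sumr; apply: eq_bigr => j _; rewrite prod_ramif_factor; ring.
Qed.

Lemma sum_pair_moments j :
  \sum_l (if l == j then second_moment (P j) - mean (P j) else mean (P l) * mean (P j)) =
  second_moment (P j) - mean (P j) + mean (P j) * (S - mean (P j)).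
Proof.
rewrite (bigD1 j) //= eqxx (eq_bigr (fun l => mean (P l) * mean (P j))) => [|l /negPf -> //].
by rewrite -mulr_suml [in RHS](bigD1 j) //=; ring.
Qed.

Hypothesis P_ge0 : forall j k, 0 <= P j k.
Hypothesis P_sum1 : forall j, (\esum_(k in [set: nat]) (P j k)%:E = 1)%E.
Hypothesis P_mean_fin : forall j, (\esum_(k in [set: nat]) (k%:R * P j k)%:E < +oo)%E.
Hypothesis P_second_fin : forall j, (\esum_(k in [set: nat]) (k%:R ^+ 2 * P j k)%:E < +oo)%E.

Lemma ramif_factor_ge0 l j i x : 0 <= ramif_factor l j i x.
Proof. by rewrite /ramif_factor; case: (i == l); case: (i == j); rewrite ?mulr1 ?mulr_ge0. Qed.

Lemma esum_prod_ramif_factor l j :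
  (\esum_(k in [set: {ffun 'I_n -> nat}]) (\prod_i ramif_factor l j i (k i))%:E)%E =
  (if l == j then second_moment (P j) - mean (P j) else mean (P l) * mean (P j))%:E.
Proof.
pose s i := if i == l then (if i == j then second_moment (P i) - mean (P i) else mean (P i))
            else (if i == j then mean (P i) else 1).
rewrite (esum_ffun_prod (s := s)) => [|i x|i]; first last.
- rewrite /ramif_factor /s; case: (i == l); case: (i == j).
  + exact: esum_mean_succ_mul.
  + under eq_esum do rewrite mulr1. exact: esum_mean_succ.
  + under eq_esum do rewrite mulrC. exact: esum_mean.
  + under eq_esum do rewrite mulr1. exact: P_sum1.
- exact: ramif_factor_ge0.
congr EFin; rewrite (bigD1 l) //= /s eqxx; case: eqP => [<-|/eqP lj].
  by rewrite big1 ?mulr1 // => i /negPf ->.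
rewrite (bigD1 j) 1?eq_sym //= eqxx (negPf lj) big1 ?mulr1 //.
by move=> i /andP[/negPf -> /negPf ->].
Qed.

Hypothesis S_gt0 : 0 < S.
Hypothesis T01 : forall j, 0 <= T j <= 1.
Hypothesis Q01 : 0 <= Q <= 1.

Lemma R0E : R0 P T Q = (\sum_j (1 - Q) * T j / S * \sum_l
  (if l == j then second_moment (P j) - mean (P j) else mean (P l) * mean (P j)))%:E.
Proof.
have c_ge0 j : 0 <= (1 - Q) * T j / S.
  have [/andP[T0 _] /andP[_ Q1]] := (T01 j, Q01).
  by rewrite !mulr_ge0 ?subr_ge0 // invr_ge0 ltW.
have term_ge0 l j k : (0 <= ((1 - Q) * T j / S * \prod_i ramif_factor l j i (k i))%:E)%E.
  by rewrite lee_fin mulr_ge0 ?prodr_ge0 // => i _; apply: ramif_factor_ge0.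
rewrite /R0 (eq_esum (fun k _ => congr1 EFin (ramif_infectedE k))).
under eq_esum do rewrite -sumEFin.
under eq_esum do under eq_bigr do rewrite -sumEFin.
rewrite esum_sum => [|k l _ _]; last by apply: sume_ge0.
under eq_bigr => l _.
  rewrite esum_sum //; under eq_bigr => j _.
    rewrite (eq_esum (fun k _ => EFinM _ _)) esumZl; last 2 first.
    - exact: c_ge0.
    - by move=> k _; rewrite lee_fin prodr_ge0 // => i _; apply: ramif_factor_ge0.
    rewrite esum_prod_ramif_factor.
    over.
  over.
rewrite exchange_big -sumEFin; apply: eq_bigr => j _ /=.
by rewrite mulr_sumr -sumEFin; apply: eq_bigr => l _; rewrite EFinM.
Qed.

End ReproductionNumber.

Theorem theorem1p2 (R : realType) (n : nat) (P : 'I_n -> nat -> R)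
    (T : 'I_n -> R) (Q : R) :
  (0 < n)%N ->
  (forall j k, (0 <= P j k)%R) ->
  (forall j, \esum_(k in [set: nat]) (P j k)%:E = 1%E) ->
  (forall j, \esum_(k in [set: nat]) ((k%:R * P j k)%R)%:E < +oo) ->
  (forall j, \esum_(k in [set: nat]) ((k%:R ^+ 2 * P j k)%R)%:E < +oo) ->
  (0 < \sum_(l < n) mean (P l))%R ->
  (forall j, 0 <= T j <= 1)%R ->
  (0 <= Q <= 1)%R ->
  R0 P T Q =
  ((1 - Q) * \sum_(j < n) T j *
     (mean (P j) * (1 - 1 / \sum_(l < n) mean (P l))
      + stdev (P j) ^+ 2 / \sum_(l < n) mean (P l)))%R%:E.
Proof.
move=> _ P_ge0 P_sum1 P_mean_fin P_second_fin S_gt0 T01 Q01.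
rewrite R0E //; congr EFin; rewrite mulr_sumr; apply: eq_bigr => j _.
rewrite sum_pair_moments /stdev sqr_sqrtr ?variance_ge0 //.
by field; apply: lt0r_neq0.
Qed.
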